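(* Let $\mathcal G$ be a rooted digraph, $T>0$ and $r\in(0,1)^N$. Let $\xi\in\Xi$ contain (as a block of consecutive terms) the synchronization string $\zeta$ with respect to some root $i^*\in\mathcal V_R$. Then there exist constants $\bar t\ge0$, $\bar k\in\mathbb Z_{\ge0}$ (not depending on the solution) such that for every maximal solution $x=(\tau,\lambda)$ of $\mathcal H_\xi$ with $\lambda(0,0)=0$ and $\tau(0,0)\in[0,1]^N$ there exists a hybrid time $(t^*,k^* )\in\operatorname{dom}(x)$ with $t^*\le\bar t$, $k^*\le\bar k$, such that $\tau(t,k)\in\mathcal A_s$ for all $(t,k)\in\operatorname{dom}(x)$ with $(t,k)\succeq(t^*,k^* )$.
   Context: $\mathcal G=(\mathcal V,\mathcal E)$ is a simple digraph on $\mathcal V=\{1,\dots,N\}$; $(i,j)\in\mathcal E$ means $j$ is an out-neighbor of $i$; $\mathcal E_i^-$ is the set of out-edges of $i$. A path is a sequence of pairwise distinct vertices with consecutive pairs in $\mathcal E$, its length the number of edges. A root is a vertex from which every other vertex is reachable by a path; $\mathcal V_R$ is the set of roots; rooted means $\mathcal V_R\ne\varnothing$. For a root $i^*$, $\mathcal V_q(i^* )$ is the set of vertices whose shortest path from $i^*$ has length $q$ (so $\mathcal V_0(i^* )=\{i^*\}$), and $q^*$ is the maximal such $q$. Let $\underline r=\min_ir_i$ and $\ell^*:=N(\lfloor1/\underline r\rfloor+1)$. A subgraph $(\mathcal V,\mathcal E')$, $\mathcal E'\subseteq\mathcal E$, is feasible if for every $i$ either $\mathcal E_i^-\subseteq\mathcal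 E'$ or $\mathcal E_i^-\cap\mathcal E'=\varnothing$. $\Xi$ is the set of infinite sequences $\xi=\phi_1\phi_2\cdots$ of feasible subgraphs; write $\phi_\lambda=(\mathcal V,\mathcal E_\lambda)$. For $q=0,\dots,q^*-1$ let $\mathcal G_q=(\mathcal V,\bigcup_{i\in\mathcal V_q(i^* )}\mathcal E_i^-)$. The synchronization string w.r.t. $i^*$ is the finite string $\zeta=\mathcal G_0\cdots\mathcal G_0\,\mathcal G_1\cdots\mathcal G_1\cdots\mathcal G_{q^*-1}\cdots\mathcal G_{q^*-1}$ in which each $\mathcal G_q$ is repeated consecutively $\ell^*$ times (length $\ell^*q^*$). Hybrid system $\mathcal H_\xi$: state $x=(\tau,\lambda)\in\mathbb R^N_{\ge0}\times\mathbb Z_{\ge0}$; flow set $C=[0,1]^N\times\mathbb Z_{\ge0}$ with $\dot\tau=\frac1T\mathbf 1_N$, $\dot\lambda=0$; jump set $D=D_\tau\times\mathbb Z_{\ge0}$, $D_\tau=\{\tau\in[0,1]^N:\max_i\tau_i=1\}$, with $x^+\in G_{\lambda+1}(\tau)\times\{\lambda+1\}$. For $\lambda\ge1$, $G_\lambda$ is the outer-semicontinuous hull (map whose graph is the closure of the graph) of $G_\lambda^0(\tau)=\{g\in\mathbb R^N:g_i=0,\ g_j\in\mathcal R_{j,\lambda}(\tau)\ \forall j\ne i\}$, where $i$ is an agent with $\tau_i=1$ and $\mathcal R_{j,\lambda}(\tau)$ equals $\{0\}$ if $(i,j)\in\mathcal E_\lambda$ and $\tau_j\in[0,r_j)$;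 $\{0,1\}$ if $(i,j)\in\mathcal E_\lambda$ and $\tau_j=r_j$; $\{1\}$ if $(i,j)\in\mathcal E_\lambda$ and $\tau_j\in(r_j,1]$; $\{\tau_j\}$ if $(i,j)\notin\mathcal E_\lambda$. Solutions: a hybrid time domain is $E\subset\mathbb R_{\ge0}\times\mathbb Z_{\ge0}$ whose truncations have the form $\bigcup_k[t_k,t_{k+1}]\times\{k\}$, $0=t_0\le t_1\le\cdots$. A solution is a function $x$ on such a domain, locally absolutely continuous in $t$ for fixed $k$, with $x(0,0)\in C\cup D$; $x(t,k)\in C$ and $\dot x=f(x)$ for a.e. $t$ in flow intervals; and $x(t,k)\in D$, $x(t,k+1)\in G(x(t,k))$ whenever $(t,k),(t,k+1)\in\operatorname{dom}x$. It is maximal if its domain cannot be properly extended. $(t_1,k_1)\preceq(t_2,k_2)$ means $t_1\le t_2$ and $k_1\le k_2$. $\mathcal A_s:=\{\mu\mathbf 1_N:\mu\in[0,1]\}\cup\{0,1\}^N$. *)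

From Stdlib Require Import Reals ZArith.
From mathcomp Require Import all_boot.
Set Implicit Arguments.
Unset Strict Implicit.
Unset Printing Implicit Defensive.
Local Open Scope R_scope.

(* Vertices are 'I_N (i.e. {0,...,N-1}, a relabelling of
   {1,...,N}); a digraph is an edge relation E : rel 'I_N, with E i j
   meaning (i,j) is an edge, i.e. j is an out-neighbour of i.           *)

Definition simple_digraph (N : nat) (E : rel 'I_N) : Prop :=
  forall i, ~~ E i i.

(* a path i = v_0, v_1, ..., v_q = j : pairwise distinct vertices with
   consecutive pairs in E; its length is q = size rest *)
Definition is_path (N : nat) (E : rel 'I_N) (i j : 'I_N) (rest : seq 'I_N) : Prop :=
  path E i rest /\ uniq (i :: rest) /\ last i rest = j.

Definition reachable (N : nat) (E : rel 'I_N) (i j : 'I_N) : Prop :=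
  exists rest, is_path E i j rest.

Definition is_root (N : nat) (E : rel 'I_N) (i : 'I_N) : Prop :=
  forall j, j <> i -> reachable E i j.

Definition rooted (N : nat) (E : rel 'I_N) : Prop := exists i, is_root E i.

Definition shortest_dist (N : nat) (E : rel 'I_N) (i j : 'I_N) (q : nat) : Prop :=
  (exists rest, is_path E i j rest /\ size rest = q) /\
  (forall rest, is_path E i j rest -> (q <= size rest)%N).

Definition in_Vq (N : nat) (E : rel 'I_N) (i : 'I_N) (q : nat) (j : 'I_N) : Prop :=
  shortest_dist E i j q.

Definition is_qstar (N : nat) (E : rel 'I_N) (i : 'I_N) (q : nat) : Prop :=
  (exists j, in_Vq E i q j) /\ (forall q' j, in_Vq E i q' j -> (q' <= q)%N).

Definition feasible (N : nat) (E E' : rel 'I_N) : Prop :=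
  (forall i j, E' i j -> E i j) /\
  (forall i, (forall j, E i j -> E' i j) \/ (forall j, ~~ E' i j)).

Definition rmin (N : nat) (r : 'I_N -> R) : R := \big[Rmin/1]_(i < N) r i.

Definition ellstar (N : nat) (r : 'I_N -> R) : nat :=
  (N * (Z.to_nat (Int_part (/ rmin r)) + 1))%N.

Definition Gq (N : nat) (E : rel 'I_N) (istar : 'I_N) (q : nat) (a b : 'I_N) : Prop :=
  E a b /\ in_Vq E istar q a.

(* Sequences xi = phi_1 phi_2 ... are represented by xi : nat -> rel 'I_N
   with phi_(n+1) = xi n.  xi contains the synchronization string
   zeta = G_0^{lstar} G_1^{lstar} ... G_{qstar-1}^{lstar} as a block of consecutive terms:
   for some offset s, phi_(s+1+m) = zeta_m for all m < lstar qstar,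
   where zeta_m = G_(m / lstar). *)
Definition contains_sync (N : nat) (E : rel 'I_N) (r : 'I_N -> R)
    (istar : 'I_N) (xi : nat -> rel 'I_N) : Prop :=
  exists qs s, is_qstar E istar qs /\
    forall m, (m < ellstar r * qs)%N ->
      forall a b, xi (s + m)%N a b = true <-> Gq E istar (m %/ ellstar r)%N a b.

Definition in_unit_cube (N : nat) (tau : 'I_N -> R) : Prop :=
  forall i, 0 <= tau i <= 1.

Definition in_C (N : nat) (tau : 'I_N -> R) (lam : nat) : Prop := in_unit_cube tau.

Definition in_Dtau (N : nat) (tau : 'I_N -> R) : Prop :=
  in_unit_cube tau /\ exists i, tau i = 1.

Definition in_D (N : nat) (tau : 'I_N -> R) (lam : nat) : Prop := in_Dtau tau.

Definition Rset (N : nat) (r : 'I_N -> R) (phi : rel 'I_N) (i j : 'I_N)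
    (tau : 'I_N -> R) (y : R) : Prop :=
  if phi i j then
    (0 <= tau j < r j /\ y = 0) \/
    (tau j = r j /\ (y = 0 \/ y = 1)) \/
    (r j < tau j <= 1 /\ y = 1)
  else y = tau j.

Definition G0 (N : nat) (r : 'I_N -> R) (phi : rel 'I_N) (tau g : 'I_N -> R) : Prop :=
  in_Dtau tau /\
  exists i, tau i = 1 /\ g i = 0 /\ forall j, j <> i -> Rset r phi i j tau (g j).

(* G_lambda: outer-semicontinuous hull (closure of the graph of G^0) *)
Definition Gjump (N : nat) (r : 'I_N -> R) (phi : rel 'I_N) (tau g : 'I_N -> R) : Prop :=
  forall eps, 0 < eps -> exists tau' g',
    (forall j, Rabs (tau' j - tau j) < eps /\ Rabs (g' j - g j) < eps) /\
    G0 r phi tau' g'.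

Definition null_set (S : R -> Prop) : Prop :=
  forall eps, 0 < eps -> exists a b : nat -> R,
    (forall n, a n <= b n) /\
    (forall x, S x -> exists n, a n < x < b n) /\
    (forall M, \big[Rplus/0]_(n < M) (b n - a n) < eps).

Definition abs_cont_on (f : R -> R) (c d : R) : Prop :=
  forall eps, 0 < eps -> exists delta, 0 < delta /\
    forall (n : nat) (a b : nat -> R),
      (forall i, (i < n)%N -> c <= a i <= b i /\ b i <= d) ->
      (forall i j, (i < n)%N -> (j < n)%N -> i <> j -> b i <= a j \/ b j <= a i) ->
      \big[Rplus/0]_(i < n) (b i - a i) < delta ->
      \big[Rplus/0]_(i < n) Rabs (f (b i) - f (a i)) < eps.

(* Hybrid time domains and solutions. A hybrid arc is given by its domain
   dom : R -> nat -> Prop and its components tau, lam (values outside dom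
   are irrelevant). *)

Definition hybrid_time_domain (dom : R -> nat -> Prop) : Prop :=
  (forall t k, dom t k -> 0 <= t) /\
  forall T J, dom T J -> exists ts : nat -> R,
    ts 0%N = 0 /\ (forall k, (k <= J)%N -> ts k <= ts k.+1) /\
    forall t k, (dom t k /\ t <= T /\ (k <= J)%N) <->
                ((k <= J)%N /\ ts k <= t <= ts k.+1).

Definition is_solution (N : nat) (E : rel 'I_N) (T : R) (r : 'I_N -> R)
    (xi : nat -> rel 'I_N)
    (dom : R -> nat -> Prop) (tau : R -> nat -> 'I_N -> R) (lam : R -> nat -> nat) : Prop :=
  hybrid_time_domain dom /\ dom 0 0%N /\
  (in_C (tau 0 0%N) (lam 0 0%N) \/ in_D (tau 0 0%N) (lam 0 0%N)) /\
  (forall k c d, c <= d -> (forall t, c <= t <= d -> dom t k) ->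
     (forall j, abs_cont_on (fun s => tau s k j) c d) /\
     abs_cont_on (fun s => INR (lam s k)) c d) /\
  (forall t k, (exists e, 0 < e /\ forall s, Rabs (s - t) < e -> dom s k) ->
     in_C (tau t k) (lam t k)) /\
  (forall k, null_set (fun t => dom t k /\
     ~ ((forall j, derivable_pt_lim (fun s => tau s k j) t (/ T)) /\
        derivable_pt_lim (fun s => INR (lam s k)) t 0))) /\
  (forall t k, dom t k -> dom t k.+1 ->
     in_D (tau t k) (lam t k) /\
     Gjump r (xi (lam t k)) (tau t k) (tau t k.+1) /\
     lam t k.+1 = (lam t k).+1).

Definition is_maximal_solution (N : nat) (E : rel 'I_N) (T : R) (r : 'I_N -> R)
    (xi : nat -> rel 'I_N)
    (dom : R -> nat -> Prop) (tau : R -> nat -> 'I_N -> R) (lam : R -> nat -> nat) : Prop :=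
  is_solution E T r xi dom tau lam /\
  ~ (exists dom' tau' lam',
       is_solution E T r xi dom' tau' lam' /\
       (forall t k, dom t k -> dom' t k) /\
       (exists t k, dom' t k /\ ~ dom t k) /\
       (forall t k, dom t k -> (forall j, tau' t k j = tau t k j) /\ lam' t k = lam t k)).

Definition in_As (N : nat) (tau : 'I_N -> R) : Prop :=
  (exists mu, 0 <= mu <= 1 /\ forall i, tau i = mu) \/
  (forall i, tau i = 0 \/ tau i = 1).

From Pilot Require Import Defs.
From Stdlib Require Import Reals Lra Lia Classical ClassicalEpsilon FunctionalExtensionality.
From mathcomp Require Import all_boot zify.
From HB Require Import structures.
Set Implicit Arguments.
Unset Strict Implicit.
Local Open Scope R_scope.

(* Between jumps all phases grow at the common rate 1/T and stay in [0, 1], so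
   every flow interval lasts at most T; a maximal solution can be prolonged
   neither by flowing nor by jumping, so it jumps arbitrarily often.  Call two
   phases equal when they agree on the circle [0, 1] / (0 ~ 1).  While the
   graphs G_q of the synchronisation string act, only agents of the layer V_q
   fire and they reset only their out-neighbours, so the agents of
   V_0, ..., V_q, once in phase with the root, stay in phase.  Every agent p of
   V_q fires during the l* jumps using G_q: otherwise p would only flow, the
   total flow time would be at most T, and since an agent flows for a time at
   least r_min T between two of its firings, no agent would fire more than
   l* / N times, so the l* firings could not all avoid p.  When p fires, its
   out-neighbours in V_(q+1) are reset to 0 or 1, in phase with p and the root.
   After the whole string all agents are in phase, i.e. the phases lie in A_s,
   and a network in phase stays in phase. *)

Lemma RplusA : associative Rplus.
Proof. by move=> x y z; rewrite Rplus_assoc. Qed.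

HB.instance Definition _ :=
  Monoid.isComLaw.Build R 0 Rplus RplusA Rplus_comm Rplus_0_l.

Lemma big_seq_Rle (I : Type) (s : seq I) (P : pred I) (F G : I -> R) :
  (forall i, List.In i s -> P i -> F i <= G i) ->
  \big[Rplus/0]_(i <- s | P i) F i <= \big[Rplus/0]_(i <- s | P i) G i.
Proof.
elim: s => [|x s IHs] FG; first by rewrite !big_nil; lra.
rewrite !big_cons; have IH := IHs (fun i si => FG i (or_intror si)).
by case: ifP => Px //; apply: Rplus_le_compat => //; apply: FG; [left|].
Qed.

Lemma Req_of_abs_small x y e0 K : 0 < e0 -> 0 < K ->
  (forall e, 0 < e < e0 -> Rabs (x - y) <= e * K) -> x = y.
Proof.
move=> e00 K0 small; apply: NNPP => xy.
have d0 : 0 < Rabs (x - y) by apply: Rabs_pos_lt; lra.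
pose e := Rmin (e0 / 2) (Rabs (x - y) / (2 * K)).
have e_pos : 0 < e by apply: Rmin_glb_lt; apply: Rdiv_lt_0_compat; lra.
have e_le : e <= e0 / 2 := Rmin_l _ _.
have : 0 < e < e0 by lra.
move/small.
have : e * K <= Rabs (x - y) / (2 * K) * K by apply: Rmult_le_compat_r; [lra | apply: Rmin_r].
have -> : Rabs (x - y) / (2 * K) * K = Rabs (x - y) / 2 by field; lra.
lra.
Qed.

Lemma bigRmin_le (I : finType) (F : I -> R) i : \big[Rmin/1]_(j : I) F j <= F i.
Proof.
have : i \in index_enum I by rewrite mem_index_enum.
elim: (index_enum I) => [|j s IHs] //; rewrite in_cons big_cons => /orP [/eqP <- | /IHs].
  exact: Rmin_l.
by have := Rmin_r (F j) (\big[Rmin/1]_(k <- s) F k); lra.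
Qed.

Lemma bigRmin_pos (I : finType) (F : I -> R) :
  (forall i, 0 < F i) -> 0 < \big[Rmin/1]_(i : I) F i.
Proof.
move=> F0; apply: (big_ind (fun v => 0 < v)) => [| u v | i _];
  [lra | exact: Rmin_glb_lt | exact: F0].
Qed.

Lemma nat_max_of_bounded (P : nat -> Prop) K : (exists k, P k) -> (forall k, P k -> (k < K)%N) ->
  exists J, P J /\ forall k, P k -> (k <= J)%N.
Proof.
elim: K => [|K IHK] [k Pk] bounded; first by have := bounded k Pk.
have [PK | notPK] := classic (P K); first by exists K; split=> // j /bounded.
apply: IHK => [|j Pj]; first by exists k.
by have := bounded j Pj; rewrite ltnS leq_eqVlt => /orP [/eqP jK | //]; rewrite jK in Pj.
Qed.

Lemma exists_argmax (I : finType) (f : I -> R) (i0 : I) : exists i, forall j, f j <= f i.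
Proof.
suff [i imax] : exists i, forall j, j \in i0 :: enum I -> f j <= f i.
  by exists i => j; apply: imax; rewrite in_cons mem_enum orbT.
elim: (enum I) => [|x s [i imax]]; first by exists i0 => j; rewrite inE => /eqP ->; lra.
have [fxi | fxi_gt] := Rle_dec (f x) (f i).
  exists i => j; rewrite !in_cons => /orP [j0 | /orP [/eqP -> // | js]]; apply: imax;
    by rewrite in_cons ?j0 ?js ?orbT.
exists x => j; rewrite !in_cons => /orP [j0 | /orP [/eqP -> | js]]; try lra;
  by have := imax j; rewrite in_cons ?j0 ?js ?orbT => /(_ isT); lra.
Qed.

Lemma steps_mono (ts : nat -> R) J : (forall k, (k < J)%N -> ts k <= ts k.+1) ->
  forall i j, (i <= j <= J)%N -> ts i <= ts j.
Proof.
move=> step i j /andP []; elim: j => [|j IHj]; first by rewrite leqn0 => /eqP ->; lra.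
rewrite leq_eqVlt => /orP [/eqP -> | ij1] jJ; first lra.
by have := IHj ij1 (ltnW jJ); have := step j jJ; lra.
Qed.

Lemma nat_min_of_exists (P : nat -> Prop) : (exists n, P n) ->
  exists n, P n /\ forall m, P m -> (n <= m)%N.
Proof.
move=> [n Pn]; elim: n {-2}n (leqnn n) Pn => [|n IHn] k kn Pk.
  by exists k; split=> // m _; move: kn; rewrite leqn0 => /eqP ->.
have [small | no_small] := classic (exists m, P m /\ (m < k)%N).
  by have [m [Pm mk]] := small; apply: (IHn m) => //; lia.
exists k; split=> // m Pm; rewrite leqNgt; apply/negP => mk.
by apply: no_small; exists m.
Qed.

Lemma real_induction (P : R -> Prop) c d : c <= d -> P c ->
  (forall s, c <= s <= d -> exists del, 0 < del /\
     forall y z, s - del < y <= s -> s <= z < s + del -> P y -> P z) ->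
  P d.
Proof.
move=> cd Pc step; pose reached x := c <= x <= d /\ P x.
have reached_bound : bound reached by exists d => x [[]].
have [s [s_ub s_lub]] :=
  completeness reached reached_bound (ex_intro reached c (conj (conj (Rle_refl c) cd) Pc)).
have cs : c <= s by apply: s_ub; split; [lra|].
have sd : s <= d by apply: s_lub => x [[]].
have [del [del0 Pstep]] := step s (conj cs sd).
have [y [Sy ys]] : exists y, reached y /\ s - del < y.
  apply: NNPP => noy; suff : s <= s - del by lra.
  by apply: s_lub => x Sx; apply: Rnot_lt_le => xs; apply: noy; exists x.
have yls := s_ub y Sy.
pose z := Rmin (s + del / 2) d.
have z_ge : s <= z /\ z < s + del by rewrite /z /Rmin; case: Rle_dec; lra.
have Sz : reached z.
  by split; [rewrite /z /Rmin; case: Rle_dec |]; [lra.. | exact: (Pstep y _ _ _ Sy.2)].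
have -> : d = z by have := s_ub z Sz; rewrite /z /Rmin; case: Rle_dec; lra.
exact: Sz.2.
Qed.

Lemma unit_interval_closure y sigma : 0 < sigma ->
  (forall s, 0 < s < sigma -> 0 <= y + s <= 1) -> 0 <= y /\ y + sigma <= 1.
Proof.
move=> sigma0 inside; split; apply: Rle_plus_epsilon => eps eps0.
  have := Rmin_l eps (sigma / 2); have := Rmin_r eps (sigma / 2).
  have := inside (Rmin eps (sigma / 2)); rewrite /Rmin; case: Rle_dec; lra.
have := Rmax_l (sigma - eps) (sigma / 2); have := Rmax_r (sigma - eps) (sigma / 2).
have := inside (Rmax (sigma - eps) (sigma / 2)); rewrite /Rmax; case: Rle_dec; lra.
Qed.

(** * Absolutely continuous functions *)

Lemma abs_cont_on_lipschitz (f : R -> R) K c d : 0 <= K ->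
  (forall u v, Rabs (f v - f u) <= K * Rabs (v - u)) -> abs_cont_on f c d.
Proof.
move=> K0 lip e e0; exists (e / (K + 1)); split; first by apply: Rdiv_lt_0_compat; lra.
move=> n a b ab _ len_ab.
have lip_sum : \big[Rplus/0]_(i < n) Rabs (f (b i) - f (a i)) <=
               K * \big[Rplus/0]_(i < n) (b i - a i).
  apply: (big_ind2 (fun u v => u <= K * v)); [lra | move=> *; lra |].
  move=> i _; have [[_ abi] _] := ab i (ltn_ord i).
  by rewrite -(Rabs_right (b i - a i)); [apply: lip | lra].
have : K * \big[Rplus/0]_(i < n) (b i - a i) <= K * (e / (K + 1)).
  by apply: Rmult_le_compat_l; lra.
have : K * (e / (K + 1)) < e.
  have -> : K * (e / (K + 1)) = e - e / (K + 1) by field; lra.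
  by have := Rdiv_lt_0_compat e (K + 1) e0 ltac:(lra); lra.
lra.
Qed.

Lemma abs_cont_on_plus (f h : R -> R) c d :
  abs_cont_on f c d -> abs_cont_on h c d -> abs_cont_on (fun s => f s + h s) c d.
Proof.
move=> acf ach e e0.
have [df [df0 Hf]] := acf (e / 2) ltac:(lra).
have [dh [dh0 Hh]] := ach (e / 2) ltac:(lra).
exists (Rmin df dh); split; first exact: Rmin_glb_lt.
move=> n a b ab disj len_ab.
have := Hf n a b ab disj ltac:(have := Rmin_l df dh; lra).
have := Hh n a b ab disj ltac:(have := Rmin_r df dh; lra).
suff : \big[Rplus/0]_(i < n) Rabs (f (b i) + h (b i) - (f (a i) + h (a i))) <=
       \big[Rplus/0]_(i < n) Rabs (f (b i) - f (a i)) +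
       \big[Rplus/0]_(i < n) Rabs (h (b i) - h (a i)) by lra.
rewrite -big_split; apply: big_seq_Rle => i _ _.
by rewrite (_ : _ - _ = (f (b i) - f (a i)) + (h (b i) - h (a i))); [apply: Rabs_triang | ring].
Qed.

Lemma derivable_pt_lim0_bound (g : R -> R) s e : derivable_pt_lim g s 0 -> 0 < e ->
  exists del, 0 < del /\ forall w, Rabs (w - s) < del -> Rabs (g w - g s) <= e * Rabs (w - s).
Proof.
move=> g'0 e0; have [del Hdel] := g'0 e e0.
exists del; split; first exact: cond_pos.
move=> w ws; have [-> | wns] := Req_dec w s.
  by rewrite !Rminus_diag Rabs_R0; lra.
have := Hdel (w - s) ltac:(lra) ws; rewrite (_ : s + (w - s) = w); last ring.
rewrite Rminus_0_r => bound.
have -> : g w - g s = (g w - g s) / (w - s) * (w - s) by field; lra.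
by rewrite Rabs_mult; apply: Rmult_le_compat_r; [apply: Rabs_pos | lra].
Qed.

Lemma affine_deriv y a T t : 0 < T -> derivable_pt_lim (fun s => y + (s - a) / T) t (/ T).
Proof.
move=> T0 eps eps0; exists (mkposreal 1 Rlt_0_1) => h h0 _.
rewrite (_ : _ / h - / T = 0); first by rewrite Rabs_R0.
by field; lra.
Qed.

Lemma abs_cont_on_affine y a T c d : 0 < T -> abs_cont_on (fun s => y + (s - a) / T) c d.
Proof.
move=> T0; apply: (abs_cont_on_lipschitz (K := / T)) => [|u v].
  by left; apply: Rinv_0_lt_compat.
rewrite (_ : _ - _ = / T * (v - u)); last by field; lra.
by rewrite Rabs_mult Rabs_right; [lra | left; apply: Rinv_0_lt_compat].
Qed.

Lemma abs_cont_on_const y c d : abs_cont_on (fun _ => y) c d.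
Proof.
by apply: (abs_cont_on_lipschitz (K := 0)) => [|u v]; rewrite ?Rminus_diag ?Rabs_R0; lra.
Qed.

Lemma null_set_sub (S S' : R -> Prop) : null_set S -> (forall x, S' x -> S x) -> null_set S'.
Proof.
move=> nullS S'S eps eps0; have [a [b [ab [cover len]]]] := nullS eps eps0.
by exists a, b; split=> //; split=> // x /S'S; apply: cover.
Qed.

Record piece := Piece { left_end : R; right_end : R; cover_index : nat }.

Definition piece_length (p : piece) := right_end p - left_end p.

(* Listing the pieces from right to left makes them pairwise disjoint
   subintervals of [lo, hi]. *)
Fixpoint pieces_within (lo hi : R) (L : seq piece) : Prop :=
  match L with
  | [::] => lo <= hi
  | p :: L' => left_end p <= right_end p <= hi /\ pieces_within lo (left_end p) L'
  end.

Lemma pieces_within_le lo hi L : pieces_within lo hi L -> lo <= hi.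
Proof. by elim: L hi => [|p L IHL] hi //= [? /IHL]; lra. Qed.

Lemma pieces_within_widen lo hi hi' L :
  pieces_within lo hi L -> hi <= hi' -> pieces_within lo hi' L.
Proof. by case: L => [|p L] /=; [lra | move=> [? ?] ?; split; [lra |]]. Qed.

Lemma pieces_within_nth lo hi L i : pieces_within lo hi L -> (i < size L)%N ->
  let p := nth (Piece 0 0 0) L i in lo <= left_end p <= right_end p /\ right_end p <= hi.
Proof.
elim: L hi i => [|p L IHL] hi [|i] //= [pbd Lwithin] iL.
  by have := pieces_within_le Lwithin; lra.
by have := IHL _ i Lwithin iL; lra.
Qed.

Lemma pieces_within_sorted lo hi L i j : pieces_within lo hi L ->
  (i < j)%N -> (j < size L)%N ->
  right_end (nth (Piece 0 0 0) L j) <= left_end (nth (Piece 0 0 0) L i).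
Proof.
elim: L hi i j => [|p L IHL] hi i j; first by move=> _ _; rewrite ltn0.
move=> [_ Lwithin]; case: j i => [|j] [|i] //= ij jL; last exact: IHL Lwithin _ _.
by have := pieces_within_nth Lwithin jL; lra.
Qed.

Lemma pieces_within_length (P : pred piece) a b lo hi L : a <= b ->
  pieces_within lo hi L ->
  (forall p, List.In p L -> P p -> a <= left_end p /\ right_end p <= b) ->
  \big[Rplus/0]_(p <- L | P p) piece_length p <= b - a.
Proof.
move=> ab; suff : forall hi, pieces_within lo hi L ->
    (forall p, List.In p L -> P p -> a <= left_end p /\ right_end p <= b) ->
    \big[Rplus/0]_(p <- L | P p) piece_length p <= Rmax 0 (Rmin hi b - a).
  move=> bound Lwithin inab; have := bound hi Lwithin inab.
  by have := Rmin_r hi b; rewrite /Rmax; case: Rle_dec; lra.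
elim: L => [|p L IHL] {}hi; first by rewrite big_nil => _ _; apply: Rmax_l.
rewrite big_cons /= => -[pbd Lwithin] inab.
have := IHL _ Lwithin (fun q qL => inab q (or_intror qL)).
case: ifP => Pp; last by rewrite /Rmax /Rmin; repeat case: Rle_dec; lra.
have [ap pb] := inab p (or_introl erefl) Pp.
by rewrite /piece_length /Rmax /Rmin; repeat case: Rle_dec; lra.
Qed.

Lemma pieces_cover_length (a b : nat -> R) M (P : pred piece) lo hi L :
  (forall n, a n <= b n) -> pieces_within lo hi L ->
  (forall p, List.In p L -> P p -> (cover_index p < M)%N /\
     a (cover_index p) <= left_end p /\ right_end p <= b (cover_index p)) ->
  \big[Rplus/0]_(p <- L | P p) piece_length p <= \big[Rplus/0]_(n < M) (b n - a n).
Proof.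
move=> ab Lwithin; elim: M P => [|M IHM] P covered.
  rewrite big_ord0; apply: (Rle_trans _ (\big[Rplus/0]_(p <- L | P p) 0)).
    by apply: big_seq_Rle => p pL Pp; have [] := covered p pL Pp.
  by rewrite big1 //; lra.
rewrite (bigID (fun p => cover_index p == M)) big_ord_recr /= Rplus_comm.
apply: Rplus_le_compat.
  apply: IHM => p pL /andP [Pp /eqP pM].
  by have [pM1 ?] := covered p pL Pp; split; first by rewrite ltnS leq_eqVlt (introF eqP pM) in pM1.
apply: (pieces_within_length (ab M) Lwithin) => p pL /andP [Pp /eqP <-].
by have [_ ?] := covered p pL Pp.
Qed.

Section ZeroDerivative.
Variables (g : R -> R) (c e : R) (a b : nat -> R).
Hypotheses (e0 : 0 < e) (ab : forall n, a n <= b n).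

Definition piece_var (p : piece) := Rabs (g (right_end p) - g (left_end p)).

(* The invariant of the creeping argument: up to an error of slope [e], the
   variation of [g] on [c, x] is carried by pieces inside the intervals
   covering the null set. *)
Definition creep_to (x : R) := exists L, pieces_within c x L /\
  (forall p, List.In p L -> a (cover_index p) < left_end p /\ right_end p < b (cover_index p)) /\
  Rabs (g x - g c) <= e * (x - c) + \big[Rplus/0]_(p <- L) piece_var p.

Lemma creep_start : creep_to c.
Proof.
exists [::]; split; first exact: Rle_refl.
by split=> [p [] | ]; rewrite big_nil !Rminus_diag Rabs_R0; lra.
Qed.

Lemma creep_through_cover s n : a n < s < b n -> exists del, 0 < del /\
  forall y z, s - del < y <= s -> s <= z < s + del -> creep_to y -> creep_to z.
Proof.
move=> sn; exists (Rmin (s - a n) (b n - s)); split; first by apply: Rmin_glb_lt; lra.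
move=> y z ys sz [L [Lwithin [Lcover Lbound]]].
have [yan zbn] : a n < y /\ z < b n.
  by have := Rmin_l (s - a n) (b n - s); have := Rmin_r (s - a n) (b n - s); lra.
exists (Piece y z n :: L); split; first by split=> /=; [lra |].
split; first by move=> p [<- | pL] //=; apply: Lcover.
rewrite big_cons (_ : piece_var _ = Rabs (g z - g y)) //.
have := Rabs_triang (g y - g c) (g z - g y).
rewrite (_ : g y - g c + (g z - g y) = g z - g c); last ring.
have cy := pieces_within_le Lwithin.
by have := Rmult_le_compat_l e (y - c) (z - c) ltac:(lra) ltac:(lra); lra.
Qed.

Lemma creep_through_flat s : derivable_pt_lim g s 0 -> exists del, 0 < del /\
  forall y z, s - del < y <= s -> s <= z < s + del -> creep_to y -> creep_to z.
Proof.
move=> g's; have [del [del0 flat]] := derivable_pt_lim0_bound g's e0.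
exists del; split=> // y z ys sz [L [Lwithin [Lcover Lbound]]].
exists L; split; first by apply: pieces_within_widen Lwithin _; lra.
split=> //; have cy := pieces_within_le Lwithin.
have := flat y ltac:(rewrite Rabs_left1; lra); rewrite (Rabs_left1 (y - s)); last lra.
have := flat z ltac:(rewrite Rabs_right; lra); rewrite (Rabs_right (z - s)); last lra.
have : Rabs (g z - g c) <= Rabs (g y - g c) + Rabs (g z - g y).
  by rewrite (_ : g z - g c = (g y - g c) + (g z - g y)); [apply: Rabs_triang | ring].
have : Rabs (g z - g y) <= Rabs (g z - g s) + Rabs (g y - g s).
  rewrite -(Rabs_Ropp (g y - g s)).
  by rewrite (_ : g z - g y = (g z - g s) + - (g y - g s)); [apply: Rabs_triang | ring].
lra.
Qed.

End ZeroDerivative.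

Theorem abs_cont_deriv0_const (g : R -> R) c d (Z : R -> Prop) : c <= d ->
  abs_cont_on g c d -> null_set Z ->
  (forall u, c <= u <= d -> ~ Z u -> derivable_pt_lim g u 0) -> g d = g c.
Proof.
move=> cd acg nullZ g'0; apply: (Req_of_abs_small (e0 := 1) (K := d - c + 1)); [lra.. |].
move=> e [e0 _]; have [del [del0 acg_e]] := acg e e0.
have [a [b [ab [cover lenab]]]] := nullZ del del0.
have [L [Lwithin [Lcover Lbound]]] : creep_to g c e a b d.
  apply: real_induction cd (creep_start _ _ _ _ _) _ => s sd.
  have [/cover [n sn] | notZ] := classic (Z s); first exact: (creep_through_cover g c e0 sn).
  exact: (creep_through_flat c a b e0 (g'0 s sd notZ)).
pose M := (\max_(p <- L) cover_index p).+1.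
have Lcover_M p : List.In p L -> (cover_index p < M)%N /\
    a (cover_index p) <= left_end p /\ right_end p <= b (cover_index p).
  move=> pL; have [? ?] := Lcover p pL; split; [|lra].
  rewrite ltnS; elim: L pL {Lwithin Lcover Lbound M} => [|q L IHL] //= [<- | pL];
    rewrite big_cons; [exact: leq_maxl | exact: leq_trans (IHL pL) (leq_maxr _ _)].
have lenL := pieces_cover_length (M := M) (P := xpredT) ab Lwithin (fun p pL _ => Lcover_M p pL).
have varL : \big[Rplus/0]_(p <- L) piece_var g p < e.
  rewrite (big_nth (Piece 0 0 0)) big_mkord.
  apply: (acg_e _ (fun i => left_end (nth (Piece 0 0 0) L i))
                  (fun i => right_end (nth (Piece 0 0 0) L i))) => [i iL | i j iL jL ij | ].
  - by have := pieces_within_nth Lwithin iL; lra.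
  - have [ltij | ltji | eqij] := ltngtP i j; last by rewrite eqij in ij.
      by right; apply: pieces_within_sorted Lwithin ltij jL.
    by left; apply: pieces_within_sorted Lwithin ltji iL.
  - by move: lenL (lenab M); rewrite (big_nth (Piece 0 0 0)) big_mkord /piece_length; lra.
lra.
Qed.

Corollary abs_cont_deriv_affine (f : R -> R) c d m (Z : R -> Prop) : c <= d ->
  abs_cont_on f c d -> null_set Z ->
  (forall u, c <= u <= d -> ~ Z u -> derivable_pt_lim f u m) -> f d = f c + m * (d - c).
Proof.
move=> cd acf nullZ f'm.
suff : f d + - m * d = f c + - m * c by lra.
apply: (abs_cont_deriv0_const (g := fun s => f s + - m * s) cd _ nullZ).
  apply: (abs_cont_on_plus acf (abs_cont_on_lipschitz (f := fun s => - m * s) c d (Rabs_pos m) _)).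
  by move=> u v /=; rewrite -Rabs_mult -Rabs_Ropp; apply: Req_le; congr Rabs; ring.
move=> u ud notZ; rewrite -(Rplus_opp_r m) -[X in _ + X]Rmult_1_r.
exact: (derivable_pt_lim_plus f (mult_real_fct (- m) id) _ _ _ (f'm u ud notZ)
          (derivable_pt_lim_scal id (- m) u 1 (derivable_pt_lim_id u))).
Qed.

(** * The jump map *)

(* The graph of the hull [Gjump] when agent [i] fires, described pointwise. *)
Definition fires (N : nat) (r : 'I_N -> R) (phi : rel 'I_N) (i : 'I_N) (tau g : 'I_N -> R) :=
  tau i = 1 /\ g i = 0 /\ forall j, j <> i ->
    (phi i j -> (g j = 0 \/ g j = 1) /\ (tau j < r j -> g j = 0) /\ (r j < tau j -> g j = 1)) /\
    (~~ phi i j -> g j = tau j).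

Section JumpMap.
Variables (N : nat) (r : 'I_N -> R) (phi : rel 'I_N).

Definition G0_at (i : 'I_N) (tau g : 'I_N -> R) :=
  tau i = 1 /\ g i = 0 /\ forall j, j <> i -> Defs.Rset r phi i j tau (g j).

Definition near_graph (eps : R) (tau g tau' g' : 'I_N -> R) :=
  forall j, Rabs (tau' j - tau j) < eps /\ Rabs (g' j - g j) < eps.

Lemma Rset_fired i j tau y : phi i j -> Defs.Rset r phi i j tau y ->
  (y = 0 \/ y = 1) /\ (tau j < r j -> y = 0) /\ (r j < tau j -> y = 1).
Proof. by rewrite /Defs.Rset => ->; lra. Qed.

Lemma fires_of_near_G0_at i tau g :
  (forall eps, 0 < eps -> exists tau' g', near_graph eps tau g tau' g' /\ G0_at i tau' g') ->
  fires r phi i tau g.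
Proof.
move=> near.
have from_near x y e0 : 0 < e0 ->
    (forall eps tau' g', 0 < eps < e0 -> near_graph eps tau g tau' g' -> G0_at i tau' g' ->
       Rabs (x - y) <= eps * 2) -> x = y.
  move=> e00 bound; apply: (Req_of_abs_small e00 (K := 2)) => [|e e_bd]; first lra.
  by have [tau' [g' [near_e G0e]]] := near e (proj1 e_bd); apply: bound near_e G0e.
split; last split.
- apply: (from_near _ _ 1) => [|eps tau' g' _ near_e [taui _]]; first lra.
  by have [] := near_e i; rewrite taui; split_Rabs; lra.
- apply: (from_near _ _ 1) => [|eps tau' g' _ near_e [_ [gi _]]]; first lra.
  by have [_] := near_e i; rewrite gi; split_Rabs; lra.
move=> j ji; split=> [phi_ij | notphi_ij]; last first.
  apply: (from_near _ _ 1) => [|eps tau' g' _ near_e [_ [_ G0j]]]; first lra.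
  move: (G0j j ji) (near_e j); rewrite /Defs.Rset (negbTE notphi_ij) => ->.
  by split_Rabs; lra.
split; last split.
- apply: NNPP => not01.
  have e0 : 0 < Rmin (Rabs (g j)) (Rabs (g j - 1)).
    by apply: Rmin_glb_lt; apply: Rabs_pos_lt => ?; apply: not01; lra.
  have [tau' [g' [near_e [_ [_ G0j]]]]] := near _ e0.
  have [_] := near_e j; have := Rmin_l (Rabs (g j)) (Rabs (g j - 1)).
  have := Rmin_r (Rabs (g j)) (Rabs (g j - 1)).
  by have [[-> | ->] _] := Rset_fired phi_ij (G0j j ji); split_Rabs; lra.
- move=> tr; apply: (from_near _ _ (r j - tau j)) => [|eps tau' g' eps_bd near_e [_ [_ G0j]]].
    lra.
  have [tau'j g'j] := near_e j; have [_ [g'0 _]] := Rset_fired phi_ij (G0j j ji).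
  by rewrite g'0 in g'j; [split_Rabs; lra | split_Rabs; lra].
- move=> rt; apply: (from_near _ _ (tau j - r j)) => [|eps tau' g' eps_bd near_e [_ [_ G0j]]].
    lra.
  have [tau'j g'j] := near_e j; have [_ [_ g'1]] := Rset_fired phi_ij (G0j j ji).
  by rewrite g'1 in g'j; [split_Rabs; lra | split_Rabs; lra].
Qed.

Lemma Gjump_fires tau g : Gjump r phi tau g -> exists i, fires r phi i tau g.
Proof.
move=> Gtg; apply: NNPP => nofire.
have far i : exists e, 0 < e /\
    forall tau' g', near_graph e tau g tau' g' -> ~ G0_at i tau' g'.
  apply: NNPP => close; apply: nofire; exists i; apply: fires_of_near_G0_at => eps eps0.
  apply: NNPP => none; apply: close; exists eps; split=> // tau' g' near_e G0e.
  by apply: none; exists tau', g'.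
pose e i := proj1_sig (constructive_indefinite_description _ (far i)).
have [e0 e_far] : (forall i, 0 < e i) /\
    forall i tau' g', near_graph (e i) tau g tau' g' -> ~ G0_at i tau' g'.
  by split=> i; have [] := proj2_sig (constructive_indefinite_description _ (far i)).
have [tau' [g' [near_m [_ [i G0i]]]]] := Gtg _ (bigRmin_pos e0).
apply: (e_far i tau' g') G0i => j; have := bigRmin_le e i; have := near_m j; lra.
Qed.

Lemma Gjump_nonempty (tau : 'I_N -> R) i : in_unit_cube tau -> tau i = 1 ->
  exists g, Gjump r phi tau g.
Proof.
move=> tau01 taui.
pose g j := if j == i then 0
  else if phi i j then (if Rlt_dec (tau j) (r j) then 0 else 1) else tau j.
exists g => eps eps0; exists tau, g.
split; first by move=> j; rewrite !Rminus_diag Rabs_R0.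
split; first by split=> //; exists i.
exists i; split=> //; rewrite /g eqxx; split=> // j ji; rewrite (introF eqP ji) /Defs.Rset.
case: (phi i j) => //; case: Rlt_dec => tr /=; first by left; have := tau01 j; lra.
have [rt | rt] := Rle_lt_or_eq_dec _ _ (Rnot_lt_le _ _ tr); right; [right | left]; last lra.
by have := tau01 j; lra.
Qed.

End JumpMap.

Lemma fires_cube (N : nat) (r : 'I_N -> R) phi i tau g :
  in_unit_cube tau -> fires r phi i tau g -> in_unit_cube g.
Proof.
move=> tau01 [_ [gi fire_j]] j; have [-> | ji] := eqVneq j i; first by rewrite gi; lra.
have [fired unfired] := fire_j j (elimN eqP ji).
case phi_ij: (phi i j); first by have [[->|->] _] := fired phi_ij; lra.
by rewrite unfired ?phi_ij //; apply: tau01.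
Qed.

Lemma fires_Rmin_le (N : nat) (r : 'I_N -> R) phi i x g a rho :
  0 < rho -> (forall b, rho <= r b) -> in_unit_cube x ->
  fires r phi i x g -> a <> i -> Rmin (g a) rho <= Rmin (x a) rho.
Proof.
move=> rho0 rho_r x01 [_ [_ fire_a]] ai; have [fired unfired] := fire_a a ai.
have := x01 a.
have := rho_r a; case phi_ia: (phi i a); last by rewrite unfired ?phi_ia //; lra.
have [[-> | ga1] [low _]] := fired phi_ia; first by rewrite /Rmin; repeat case: Rle_dec; lra.
have : r a <= x a by apply: Rnot_lt_le => /low; lra.
by rewrite ga1 /Rmin; repeat case: Rle_dec; lra.
Qed.

Lemma fires_unchanged (N : nat) (r : 'I_N -> R) phi i x g a : 0 < r a < 1 ->
  fires r phi i x g -> a <> i -> (phi i a -> x a = 0 \/ x a = 1) -> g a = x a.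
Proof.
move=> ra [_ [_ fire_a]] ai x01; have [fired unfired] := fire_a a ai.
case phi_ia: (phi i a); last by rewrite unfired ?phi_ia.
by have [[-> | ->] [low high]] := fired phi_ia; case: (x01 phi_ia) => xa;
  rewrite xa in low high *; [| have := high ltac:(lra) | have := low ltac:(lra) |]; lra.
Qed.

(** * Synchronisation along a run *)

Lemma le_floor_inv_succ (c : nat) rho : 0 < rho -> INR c * rho <= 1 + rho ->
  (c <= Z.to_nat (Int_part (/ rho)) + 1)%N.
Proof.
move=> rho0 c_rho.
have c_le : INR c <= / rho + 1.
  have -> : / rho + 1 = (1 + rho) / rho by field; lra.
  have -> : INR c = INR c * rho / rho by field; lra.
  by apply: Rmult_le_compat_r => //; left; apply: Rinv_0_lt_compat.
have [floor_le floor_gt] := base_Int_part (/ rho).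
have floor0 : (0 <= Int_part (/ rho))%Z.
  have : (-1 < Int_part (/ rho))%Z by apply: lt_IZR; have := Rinv_0_lt_compat rho rho0; lra.
  by lia.
have floorE : IZR (Int_part (/ rho)) = INR (Z.to_nat (Int_part (/ rho))).
  by rewrite INR_IZR_INZ Znat.Z2Nat.id.
suff /INR_lt /ltP : INR c < INR (Z.to_nat (Int_part (/ rho)) + 2) by lia.
by rewrite plus_INR -floorE (_ : INR 2 = 2); [lra | rewrite /=; ring].
Qed.

Lemma sum_le_except (I : finType) (c : I -> nat) (m : nat) (p : I) :
  (forall a, (c a <= m)%N) -> c p = 0%N -> ((\sum_(a : I) c a) + m <= #|I| * m)%N.
Proof.
move=> cm cp; have := sum_nat_const I m; rewrite (bigD1 p) //= => <-.
by rewrite (bigD1 p) //= cp add0n addnC leq_add2l; exact: leq_sum.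
Qed.

(* [u] and [v] are the same point of the circle [0, 1] / (0 ~ 1). *)
Definition phase_eq (u v : R) := u = v \/ ((u = 0 \/ u = 1) /\ (v = 0 \/ v = 1)).

Definition synced (N : nat) (istar : 'I_N) (S : 'I_N -> Prop) (z : 'I_N -> R) :=
  forall a, S a -> phase_eq (z a) (z istar).

Lemma synced_shift (N : nat) (istar : 'I_N) S (z z' : 'I_N -> R) c : 0 <= c ->
  in_unit_cube z' -> (forall j, z' j = z j + c) -> synced istar S z -> synced istar S z'.
Proof.
move=> c0 cube' shift sync a Sa; rewrite !shift.
have := cube' a; have := cube' istar; rewrite !shift.
case: (sync a Sa) => [-> | [za zi]]; first by left.
have [-> | c_pos] := Req_dec c 0; first by rewrite !Rplus_0_r; right.
by left; lra.
Qed.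

Lemma synced_all_As (N : nat) (istar : 'I_N) (z : 'I_N -> R) :
  in_unit_cube z -> synced istar (fun _ => True) z -> in_As z.
Proof.
move=> cube sync; have [zi01 | zi_in] := classic (z istar = 0 \/ z istar = 1).
  by right=> a; case: (sync a I) => [-> | [? _]].
left; exists (z istar); split; first exact: cube.
by move=> a; case: (sync a I) => [-> | [_ ?]].
Qed.

(* A discrete record of a solution: [y k] and [x k] are the phases at the start
   and at the end of the [k]-th flow interval, of length [d k]. *)
Record phase_run (N : nat) (r : 'I_N -> R) (T : R) (xi : nat -> rel 'I_N)
    (y x : nat -> 'I_N -> R) (d : nat -> R) (fire : nat -> 'I_N) (J : nat) : Prop := {
  run_flow : forall k, (k <= J)%N -> forall j, x k j = y k j + d k / T;
  run_duration : forall k, (k <= J)%N -> 0 <= d k;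
  run_cube_start : forall k, (k <= J)%N -> in_unit_cube (y k);
  run_cube_end : forall k, (k <= J)%N -> in_unit_cube (x k);
  run_fires : forall k, (k < J)%N -> fires r (xi k) (fire k) (x k) (y k.+1) }.

Lemma phase_run_shift N r T xi y x d fire J K0 J' :
  @phase_run N r T xi y x d fire J -> (K0 + J' <= J)%N ->
  phase_run r T (fun k => xi (K0 + k)%N) (fun k => y (K0 + k)%N) (fun k => x (K0 + k)%N)
    (fun k => d (K0 + k)%N) (fun k => fire (K0 + k)%N) J'.
Proof.
move=> [flow dur cube_y cube_x jump] KJ.
split=> k kJ'; [apply: flow | apply: dur | apply: cube_y | apply: cube_x |]; try lia.
by rewrite addnS; apply: jump; lia.
Qed.

Section Run.
Variables (N : nat) (E : rel 'I_N) (r : 'I_N -> R) (T : R) (xi : nat -> rel 'I_N)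
  (istar : 'I_N) (y x : nat -> 'I_N -> R) (d : nat -> R) (fire : nat -> 'I_N) (J : nat).
Hypotheses (T0 : 0 < T) (r01 : forall i, 0 < r i < 1) (run : phase_run r T xi y x d fire J).

Lemma synced_flow S k : (k <= J)%N -> synced istar S (y k) -> synced istar S (x k).
Proof.
move=> kJ; apply: synced_shift (run_cube_end run kJ) (run_flow run kJ).
exact: Rmult_le_pos (run_duration run kJ) (Rlt_le _ _ (Rinv_0_lt_compat T T0)).
Qed.

Lemma synced_jump S k : (k < J)%N -> S istar ->
  (forall b, S b -> b <> fire k -> xi k (fire k) b -> S (fire k)) ->
  synced istar S (x k) -> synced istar S (y k.+1).
Proof.
move=> kJ Si S_closed sync; have [x_fire [y_fire fire_b]] := run_fires run kJ.
have [S_fire | notS_fire] := classic (S (fire k)).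
  have S01 a : S a -> x k a = 0 \/ x k a = 1.
    move=> Sa; have : x k istar = 0 \/ x k istar = 1.
      by case: (sync _ S_fire) => [<- | [_ ?]] //; right.
    by case: (sync a Sa) => [-> | [? _]].
  suff S01' a : S a -> y k.+1 a = 0 \/ y k.+1 a = 1 by move=> a Sa; right; split; apply: S01'.
  move=> Sa; have [-> | afire] := eqVneq a (fire k); first by left.
  have [fired unfired] := fire_b a (elimN eqP afire).
  by case phi: (xi k (fire k) a); [have [] := fired phi | rewrite unfired ?phi //; exact: S01].
have unchanged a : S a -> y k.+1 a = x k a.
  move=> Sa; have afire : a <> fire k by move=> eq_a; apply: notS_fire; rewrite -eq_a.
  have [_ unfired] := fire_b a afire; apply: unfired; apply/negP => phi.
  exact: notS_fire (S_closed a Sa afire phi).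
by move=> a Sa; rewrite !unchanged //; exact: sync.
Qed.

Lemma synced_run S k1 k2 : (k1 <= k2 <= J)%N -> S istar ->
  (forall k b, (k1 <= k < k2)%N -> S b -> b <> fire k -> xi k (fire k) b -> S (fire k)) ->
  synced istar S (y k1) -> synced istar S (y k2).
Proof.
move=> /andP [k12 k2J] Si S_closed sync1; elim: k2 k12 k2J S_closed => [|k2 IHk2] k12 k2J S_closed.
  by rewrite leqn0 in k12; rewrite -(eqP k12).
move: k12; rewrite leq_eqVlt => /orP [/eqP <- // | k12].
apply: synced_jump => //; first by move=> b Sb bk; apply: S_closed => //; lia.
apply: synced_flow; first lia.
by apply: IHk2 => // [|k b kk]; [lia | apply: S_closed; lia].
Qed.

Definition fire_count (a : 'I_N) (n : nat) : nat := (\sum_(k < n) (fire k == a))%N.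

Definition flow_time (n : nat) : R := \big[Rplus/0]_(k < n) d k.

Lemma sum_fire_count n : (\sum_(a : 'I_N) fire_count a n)%N = n.
Proof.
elim: n => [|n IHn]; first by rewrite big1 // => a _; rewrite /fire_count big_ord0.
rewrite /fire_count; under eq_bigr do rewrite big_ord_recr /=.
rewrite big_split /= IHn (bigD1 (fire n)) //= eqxx big1 ?addn0 ?addn1 // => a a_fire.
by rewrite eq_sym (negbTE a_fire).
Qed.

(* Each firing of [a] costs it a potential [rho * T], which only flowing restores. *)
Lemma firing_potential rho a n : 0 < rho -> (forall b, rho <= r b) -> (n <= J)%N ->
  INR (fire_count a n) * rho * T + T * Rmin (y n a) rho <= flow_time n + rho * T.
Proof.
move=> rho0 rho_r; have rho1 : rho <= 1 by have := rho_r a; have := r01 a; lra.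
elim: n => [|n IHn] nJ.
  rewrite /fire_count /flow_time !big_ord0 /= Rmult_0_l Rmult_0_l Rplus_0_l Rplus_0_l.
  by rewrite (Rmult_comm rho T); apply: Rmult_le_compat_l; [lra | apply: Rmin_r].
have IH := IHn (ltnW nJ); have [x_fire [y_fire _]] := run_fires run nJ.
have flow_gain : T * Rmin (x n a) rho <= T * Rmin (y n a) rho + d n.
  have dT : 0 <= d n / T.
    exact: Rmult_le_pos (run_duration run (ltnW nJ)) (Rlt_le _ _ (Rinv_0_lt_compat T T0)).
  rewrite (_ : d n = T * (d n / T)); last by field; lra.
  rewrite -Rmult_plus_distr_l (run_flow run (ltnW nJ)).
  by apply: Rmult_le_compat_l; [lra | rewrite /Rmin; repeat case: Rle_dec; lra].
rewrite /fire_count /flow_time !big_ord_recr /= -/(fire_count a n) -/(flow_time n).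
have [fire_a | fire_na] := eqVneq (fire n) a.
  rewrite fire_a in x_fire y_fire; rewrite y_fire plus_INR /=.
  by move: flow_gain IH; rewrite x_fire /Rmin; repeat case: Rle_dec; nra.
rewrite addn0.
have := fires_Rmin_le rho0 rho_r (run_cube_end run (ltnW nJ)) (run_fires run nJ)
  (fun eq_a => elimN eqP fire_na (esym eq_a)).
by have := Rlt_le _ _ T0; nra.
Qed.

Section Block.
Variables (V : nat -> 'I_N -> Prop) (q : nat).

Definition below_layer (q' : nat) (a : 'I_N) := exists q'', (q'' <= q')%N /\ V q'' a.

Hypotheses (V_pred : forall q' j, V q'.+1 j -> exists p, V q' p /\ E p j)
  (V_unique : forall q1 q2 a, V q1 a -> V q2 a -> q1 = q2) (V0 : V 0%N istar)
  (block_J : (ellstar r <= J)%N)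
  (block_edges : forall k, (k < ellstar r)%N -> forall a b, xi k a b <-> E a b /\ V q a)
  (sync0 : synced istar (below_layer q) (y 0%N)).

Lemma block_prefix_synced n : (n <= ellstar r)%N -> synced istar (below_layer q) (y n).
Proof.
move=> nL; apply: synced_run sync0; first by rewrite leq0n (leq_trans nL block_J).
  by exists 0%N; split=> //; exact: V0.
move=> k b /andP [_ kn] _ _ edge; exists q; split=> //.
by have [] := (block_edges (leq_trans kn nL) _ _).1 edge.
Qed.

Lemma below_layer_fire_01 n a : (n < ellstar r)%N -> xi n (fire n) a -> below_layer q a ->
  x n a = 0 \/ x n a = 1.
Proof.
move=> nL edge a_below.
have sync := synced_flow (ltnW (leq_trans nL block_J)) (block_prefix_synced (ltnW nL)).
have [_ V_fire] := (block_edges nL _ _).1 edge.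
have [x_fire _] := run_fires run (leq_trans nL block_J).
have x_istar : x n istar = 0 \/ x n istar = 1.
  by case: (sync (fire n)) => [| <- | [_ ?]] //; [exists q | right].
by case: (sync a a_below) => [-> | [? _]].
Qed.

Lemma silent_agent_flows p n : V q p -> (forall k, (k < ellstar r)%N -> fire k <> p) ->
  (n <= ellstar r)%N -> y n p = y 0%N p + flow_time n / T.
Proof.
move=> Vp silent; elim: n => [|n IHn] nL.
  by rewrite /flow_time big_ord0 /Rdiv Rmult_0_l Rplus_0_r.
have nJ := leq_trans nL block_J.
have pn : p <> fire n by move=> pf; apply: (silent n nL); rewrite pf.
rewrite (fires_unchanged (r01 p) (run_fires run nJ) pn); last first.
  by move=> edge; apply: below_layer_fire_01 edge _ => //; exists q.
rewrite (run_flow run (ltnW nJ)) IHn ?(ltnW nL) // /flow_time big_ord_recr /=.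
by rewrite /Rdiv Rmult_plus_distr_r; ring.
Qed.

Lemma layer_agent_fires p : V q p -> exists k, (k < ellstar r)%N /\ fire k = p.
Proof.
move=> Vp; apply: NNPP => nofire.
have silent k : (k < ellstar r)%N -> fire k <> p by move=> kL fp; apply: nofire; exists k.
have [rmin0 rmin_r] : 0 < rmin r /\ forall b, rmin r <= r b.
  by split; [apply: bigRmin_pos => b; have := r01 b; lra | exact: bigRmin_le].
have flowL : flow_time (ellstar r) <= T.
  have := silent_agent_flows Vp silent (leqnn _); have [p0 _] := run_cube_start run (leq0n J) p.
  have [_ p1] := run_cube_start run block_J p => flowp.
  have : flow_time (ellstar r) / T <= 1 by lra.
  move/(Rmult_le_compat_r T _ _ (Rlt_le _ _ T0)).
  by rewrite /Rdiv Rmult_assoc Rinv_l ?Rmult_1_r ?Rmult_1_l; lra.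
have count_le a : (fire_count a (ellstar r) <= Z.to_nat (Int_part (/ rmin r)) + 1)%N.
  apply: le_floor_inv_succ => //; apply: (Rmult_le_reg_r T) => //.
  have := firing_potential a rmin0 rmin_r block_J; have [y0 _] := run_cube_start run block_J a.
  have : 0 <= T * Rmin (y (ellstar r) a) (rmin r).
    by apply: Rmult_le_pos; [lra | apply: Rmin_glb; lra].
  by nra.
have count_p : fire_count p (ellstar r) = 0%N.
  by apply: big1 => k _; apply/eqP; rewrite eqb0; apply/eqP; exact: silent.
have := sum_le_except count_le count_p; rewrite sum_fire_count card_ord /ellstar.
by case: (Z.to_nat _) => [|m] /=; lia.
Qed.

Lemma block_synced : synced istar (below_layer q.+1) (y (ellstar r)).
Proof.
move=> a [q' [q'q Vq'a]]; move: q'q; rewrite leq_eqVlt ltnS => /orP [/eqP q'q | q'q].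
  subst q'; have [p [Vp Epa]] := V_pred Vq'a; have [n [nL fire_n]] := layer_agent_fires Vp.
  have nJ := leq_trans nL block_J.
  have [_ [y_fire fire_b]] := run_fires run nJ; rewrite fire_n in y_fire fire_b.
  have ap : a <> p by move=> eq_ap; rewrite eq_ap in Vq'a; have := V_unique Vq'a Vp; lia.
  have [ya01 _] := (fire_b a ap).1 ((block_edges nL _ _).2 (conj Epa Vp)).
  have sync_n1 := block_prefix_synced nL.
  pose S b := below_layer q b \/ b = a.
  suff : synced istar S (y (ellstar r)) by apply; right.
  apply: (synced_run (k1 := n.+1)); rewrite ?nL ?block_J //; first by left; exists 0%N.
    move=> k b /andP [_ kL] _ _ edge; left; exists q; split=> //.
    by have [] := (block_edges kL _ _).1 edge.
  move=> b [b_below | ->]; first exact: sync_n1.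
  have : phase_eq (y n.+1 p) (y n.+1 istar) by apply: sync_n1; exists q.
  by rewrite y_fire => -[<- | [_ ?]]; right; split=> //; left.
by apply: block_prefix_synced (leqnn _) _ _; exists q'.
Qed.

End Block.

End Run.

Theorem synced_after_sync_string N (E : rel 'I_N) r T xi istar y x d fire J
    (V : nat -> 'I_N -> Prop) s qs :
  0 < T -> (forall i, 0 < r i < 1) -> phase_run r T xi y x d fire J ->
  (forall q j, V q.+1 j -> exists p, V q p /\ E p j) ->
  (forall q1 q2 a, V q1 a -> V q2 a -> q1 = q2) -> V 0%N istar ->
  (forall a, V 0%N a -> a = istar) ->
  (forall i, (i < ellstar r * qs)%N -> forall a b,
     xi (s + i)%N a b <-> E a b /\ V (i %/ ellstar r)%N a) ->
  (forall a, exists q, (q <= qs)%N /\ V q a) ->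
  forall k, (s + ellstar r * qs <= k <= J)%N -> synced istar (fun _ => True) (y k).
Proof.
move=> T0 r01 run V_pred V_unique V0 V0_only string layered k /andP [sk kJ].
have L0 : (0 < ellstar r)%N.
  by rewrite /ellstar muln_gt0 addn1 andbT (leq_ltn_trans _ (ltn_ord istar)).
have stage q : (q <= qs)%N -> synced istar (below_layer V q) (y (s + ellstar r * q)%N).
  elim: q => [|q IHq] qqs.
    move=> a [q' [q'0 Vq'a]]; left; move: q'0; rewrite leqn0 => /eqP q'0.
    by rewrite (V0_only a) // -q'0.
  pose K0 := (s + ellstar r * q)%N.
  have Lq : (ellstar r * q.+1 <= ellstar r * qs)%N by rewrite leq_mul2l qqs orbT.
  rewrite mulnS in Lq.
  have K0_end : (s + ellstar r * q.+1 = K0 + ellstar r)%N by rewrite mulnS /K0; lia.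
  have run' := phase_run_shift run (K0 := K0) (J' := J - K0) ltac:(rewrite /K0; lia).
  rewrite K0_end; apply: (block_synced T0 r01 run' V_pred V_unique V0 (q := q)).
  - by rewrite /K0; lia.
  - move=> k' k'L a b; rewrite /= /K0 -addnA string; last lia.
    by rewrite mulnC divnMDl // divn_small // addn0.
  - by rewrite /= addn0; apply: IHq; exact: ltnW.
apply: (synced_run T0 run (k1 := (s + ellstar r * qs)%N)) => //; first by rewrite sk.
move=> a _; apply: stage (leqnn qs) _ _; have [q [qqs Vqa]] := layered a.
by exists q.
Qed.

(** * Breadth-first layers *)

Section Layers.
Variables (N : nat) (E : rel 'I_N) (istar : 'I_N).

Lemma walk_to_path i w : path E i w ->
  exists rest, is_path E i (last i w) rest /\ (size rest <= size w)%N.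
Proof.
case/shortenP=> rest walk_rest uniq_rest sub_rest; exists rest; split=> //.
by apply: uniq_leq_size sub_rest; case/andP: uniq_rest.
Qed.

Lemma layer_exists : is_root E istar -> forall j, exists q, in_Vq E istar q j.
Proof.
move=> root j; have [rest path_j] : reachable E istar j.
  by have [-> | ji] := eqVneq j istar; [exists [::] | apply: root; exact/eqP].
have [q [[rest' [path' size']] q_min]] := nat_min_of_exists
  (ex_intro (fun q => exists rest, is_path E istar j rest /\ size rest = q) _
     (ex_intro _ rest (conj path_j erefl))).
by exists q; split; [exists rest' | move=> rest2 path2; apply: q_min; exists rest2].
Qed.

Lemma layer_unique q1 q2 a : in_Vq E istar q1 a -> in_Vq E istar q2 a -> q1 = q2.
Proof.
move=> [[r1 [p1 <-]] min1] [[r2 [p2 <-]] min2].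
by apply/eqP; rewrite eqn_leq min1 ?min2.
Qed.

Lemma layer0_root : in_Vq E istar 0%N istar.
Proof. by split; [exists [::] | move=> *]. Qed.

Lemma layer0_only a : in_Vq E istar 0%N a -> a = istar.
Proof. by move=> [[[|? ?] [[_ [_ <-]] //]] _]. Qed.

Lemma layer_pred q j : in_Vq E istar q.+1 j -> exists p, in_Vq E istar q p /\ E p j.
Proof.
move=> [[rest [[walk [uniq_rest last_rest]] size_rest]] j_min].
case/lastP: rest walk uniq_rest last_rest size_rest => [|rest' z] //.
rewrite last_rcons rcons_path size_rcons => /andP [walk' edge] uniq_rest zj /eqP.
rewrite eqSS => /eqP size'; subst z.
exists (last istar rest'); split=> //; split.
  exists rest'; split=> //; split=> //; split=> //.
  by move: uniq_rest; rewrite -cats1 -cat_cons cat_uniq => /andP [].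
move=> rest2 [walk2 [_ last2]]; rewrite leqNgt; apply/negP => short.
have walk_j : path E istar (rcons rest2 j) by rewrite rcons_path walk2 last2 edge.
have [rest3 [path3 size3]] := walk_to_path walk_j.
rewrite last_rcons size_rcons in path3 size3.
by have := j_min rest3 path3; lia.
Qed.

End Layers.

(** * Solutions of the hybrid system *)

(* The hybrid time domain with jump times [ts 1, ..., ts J], ending at time [ts J.+1]. *)
Definition stepped_domain (ts : nat -> R) (J : nat) (t : R) (k : nat) : Prop :=
  (k <= J)%N /\ ts k <= t <= ts k.+1.

Lemma stepped_domain_htd (ts : nat -> R) J : ts 0%N = 0 ->
  (forall k, (k <= J)%N -> ts k <= ts k.+1) -> hybrid_time_domain (stepped_domain ts J).
Proof.
move=> ts0 step; have mono := steps_mono (J := J.+1) step.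
split=> [t k [kJ tk] | T0 J0 [J0J T0J0]].
  by have := mono 0%N k ltac:(lia); lra.
exists (fun k => if (k <= J0)%N then ts k else T0).
rewrite leq0n ts0; split=> //; split=> [k kJ0 | t k].
  by rewrite kJ0; case: ifP => kJ0'; [apply: step; lia | rewrite (_ : k = J0); [lra | lia]].
case: (boolP (k <= J0)%N) => kJ0; last by split=> [[_ [_ ?]] | []].
case: (ltnP k J0) => [kJ0' | J0k].
  split=> [[[_ tk] _] | [_ tk]]; first by split.
  have := mono k.+1 J0 ltac:(lia).
  by split; [split; [lia | exact: tk] | split=> //; lra].
have {J0k kJ0} -> : k = J0 by lia.
split=> [[[_ tk] [tT0 _]] | [_ tk]]; first by split; [| lra].
by split; [split; [exact: J0J | lra] | split=> //; lra].
Qed.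

Section Solution.
Variables (N : nat) (E : rel 'I_N) (T : R) (r : 'I_N -> R) (xi : nat -> rel 'I_N)
  (dom : R -> nat -> Prop) (tau : R -> nat -> 'I_N -> R) (lam : R -> nat -> nat).
Hypotheses (T0 : 0 < T) (sol : is_solution E T r xi dom tau lam).

Lemma flow_affine k c d : c <= d -> (forall t, c <= t <= d -> dom t k) ->
  (forall j, tau d k j = tau c k j + (d - c) / T) /\ lam d k = lam c k.
Proof.
move=> cd cd_dom; have [_ [_ [_ [ac [_ [null _]]]]]] := sol.
have [ac_tau ac_lam] := ac k c d cd cd_dom.
have deriv u : c <= u <= d ->
    ~ (dom u k /\ ~ ((forall j, derivable_pt_lim (fun s => tau s k j) u (/ T)) /\
                     derivable_pt_lim (fun s => INR (lam s k)) u 0)) ->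
    (forall j, derivable_pt_lim (fun s => tau s k j) u (/ T)) /\
    derivable_pt_lim (fun s => INR (lam s k)) u 0.
  by move=> ud good; apply: NNPP => bad; apply: good; split; [exact: cd_dom |].
split=> [j |].
  have -> := abs_cont_deriv_affine cd (ac_tau j) (null k) (fun u ud Zu => (deriv u ud Zu).1 j).
  by rewrite /Rdiv Rmult_comm.
apply: INR_eq.
rewrite (abs_cont_deriv_affine cd ac_lam (null k) (fun u ud Zu => (deriv u ud Zu).2)).
by ring.
Qed.

Lemma interior_cube k a b t : (forall s, a <= s <= b -> dom s k) -> a < t < b ->
  in_unit_cube (tau t k).
Proof.
move=> ab_dom tab; have [_ [_ [_ [_ [interior _]]]]] := sol; apply: (interior t k).
exists (Rmin (t - a) (b - t)); split; first by apply: Rmin_glb_lt; lra.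
move=> s st; apply: ab_dom; move: st (Rmin_l (t - a) (b - t)) (Rmin_r (t - a) (b - t)).
by split_Rabs; lra.
Qed.

Lemma segment_cube k a b : a < b -> (forall s, a <= s <= b -> dom s k) ->
  in_unit_cube (tau a k) /\ in_unit_cube (tau b k).
Proof.
move=> ab ab_dom.
have flow t j : a <= t <= b -> tau t k j = tau a k j + (t - a) / T.
  move=> tab; have sub s : a <= s <= t -> dom s k by move=> sa; apply: ab_dom; lra.
  by have [-> _] := flow_affine (proj1 tab) sub.
have closure j : 0 <= tau a k j /\ tau a k j + (b - a) / T <= 1.
  apply: unit_interval_closure => [|s s_bd]; first by apply: Rdiv_lt_0_compat; lra.
  have s_t : s = (a + s * T - a) / T by field; lra.
  have st : a < a + s * T < b.
    split; first by have := Rmult_lt_0_compat s T (proj1 s_bd) T0; lra.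
    have : s * T < (b - a) / T * T by apply: Rmult_lt_compat_r; lra.
    by rewrite (_ : (b - a) / T * T = b - a); [lra | field; lra].
  rewrite s_t -flow; last lra.
  exact: interior_cube ab_dom st j.
have ba0 : 0 <= (b - a) / T by left; apply: Rdiv_lt_0_compat; lra.
by split=> j; [| rewrite (flow b j); last lra]; have := closure j; lra.
Qed.

Lemma truncation T1 J1 : dom T1 J1 -> exists ts : nat -> R,
  [/\ ts 0%N = 0, ts J1.+1 = T1, forall k, (k <= J1)%N -> ts k <= ts k.+1,
      forall t k, (k <= J1)%N -> ts k <= t <= ts k.+1 -> dom t k &
      forall t k, dom t k -> t <= T1 -> (k <= J1)%N -> ts k <= t <= ts k.+1].
Proof.
move=> domT1; have [[_ htd] _] := sol.
have [ts [ts0 [mono trunc]]] := htd T1 J1 domT1.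
have [_ [_ T1_le]] := (trunc T1 J1).1 (conj domT1 (conj (Rle_refl _) (leqnn _))).
have [_ [end_le _]] :=
  (trunc (ts J1.+1) J1).2 (conj (leqnn _) (conj (mono J1 (leqnn _)) (Rle_refl _))).
exists ts; split=> // [| t k kJ1 tk | t k dom_tk tT1 kJ1]; first lra.
  by have [] := (trunc t k).2 (conj kJ1 tk).
by have [] := (trunc t k).1 (conj dom_tk (conj tT1 kJ1)).
Qed.

(* Hybrid time domains are only constrained through their truncations, so this
   needs the dynamics: at the [k]-th jump some phase equals 1, hence the flow
   of index [k] cannot go on past it. *)
Lemma solution_time_mono t k t' k' : dom t k -> dom t' k' -> (k < k')%N -> t <= t'.
Proof.
move=> dom_tk dom_t'k' kk'.
have [ts [_ ts_end mono ts_dom _]] := truncation dom_t'k'.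
pose p := ts k.+1.
have pt' : p <= t'.
  by rewrite -ts_end; apply: (steps_mono (J := k'.+1)) => [i ik' |]; [apply: mono | lia].
have dom_pk : dom p k by apply: ts_dom; [lia | have := mono k (ltnW kk'); rewrite /p; lra].
have dom_pk1 : dom p k.+1 by apply: ts_dom; [lia | have := mono k.+1 kk'; rewrite /p; lra].
have [_ [_ [_ [_ [_ [_ jumps]]]]]] := sol.
have [[_ [j tau_pj]] _] := jumps p k dom_pk dom_pk1.
apply: Rnot_lt_le => t'p; have tp : p < t by lra.
have [ts2 [_ ts2_end _ ts2_dom ts2_covers]] := truncation dom_tk.
have [ts2p _] := ts2_covers p k dom_pk (ltac:(lra)) (leqnn k).
have pt_dom s : p <= s <= t -> dom s k by move=> ps; apply: ts2_dom => //; rewrite ts2_end; lra.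
have := interior_cube pt_dom (t := (p + t) / 2) ltac:(lra) j.
have [-> _] := flow_affine (c := p) (d := (p + t) / 2) ltac:(lra) (fun s ps => pt_dom s ltac:(lra)).
by rewrite tau_pj; have := Rdiv_lt_0_compat ((p + t) / 2 - p) T ltac:(lra) T0; lra.
Qed.

Record jump_schedule (ts : nat -> R) (T1 : R) (J1 : nat) : Prop := JumpSchedule {
  schedule_start : ts 0%N = 0;
  schedule_end : ts J1.+1 = T1;
  schedule_mono : forall k, (k <= J1)%N -> ts k <= ts k.+1;
  schedule_covers : forall t k, dom t k -> t <= T1 -> (k <= J1)%N -> ts k <= t <= ts k.+1;
  schedule_dom : forall k t, (k <= J1)%N -> ts k <= t <= ts k.+1 -> dom t k;
  schedule_lam : forall k t, (k <= J1)%N -> ts k <= t <= ts k.+1 -> lam t k = k;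
  schedule_cube : forall k t, (k <= J1)%N -> ts k <= t <= ts k.+1 -> in_unit_cube (tau t k);
  schedule_flow : forall k t, (k <= J1)%N -> ts k <= t <= ts k.+1 ->
    forall j, tau t k j = tau (ts k) k j + (t - ts k) / T;
  schedule_fires : forall k, (k < J1)%N ->
    exists i, fires r (xi k) i (tau (ts k.+1) k) (tau (ts k.+1) k.+1) }.

Hypotheses (lam00 : lam 0 0%N = 0%N) (tau00 : in_unit_cube (tau 0 0%N)).

Lemma solution_schedule T1 J1 : dom T1 J1 -> exists ts, jump_schedule ts T1 J1.
Proof.
move=> domT1; have [ts [ts0 ts_end mono ts_dom covers]] := truncation domT1.
have flow k t : (k <= J1)%N -> ts k <= t <= ts k.+1 ->
    (forall j, tau t k j = tau (ts k) k j + (t - ts k) / T) /\ lam t k = lam (ts k) k.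
  by move=> kJ1 tk; apply: flow_affine => [|s sk]; [lra | apply: ts_dom; [| lra]].
have jump k : (k < J1)%N -> in_D (tau (ts k.+1) k) (lam (ts k.+1) k) /\
    Gjump r (xi (lam (ts k.+1) k)) (tau (ts k.+1) k) (tau (ts k.+1) k.+1) /\
    lam (ts k.+1) k.+1 = (lam (ts k.+1) k).+1.
  move=> kJ1; have [_ [_ [_ [_ [_ [_ jumps]]]]]] := sol.
  have := mono k (ltnW kJ1); have := mono k.+1 kJ1 => m1 m0.
  by apply: jumps; apply: ts_dom; lia || lra.
have lam_end k : (k <= J1)%N -> lam (ts k.+1) k = lam (ts k) k.
  by move=> kJ1; have [_ ->] := flow k (ts k.+1) kJ1 ltac:(have := mono k kJ1; lra).
have start k : (k <= J1)%N -> lam (ts k) k = k /\ in_unit_cube (tau (ts k) k).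
  elim: k => [|k IHk] kJ1; first by rewrite ts0.
  have [lam_k cube_k] := IHk (ltnW kJ1); have [[cube_end _] [Gk lam_k1]] := jump k kJ1.
  rewrite lam_end ?lam_k in Gk lam_k1; last exact: ltnW.
  by split=> //; have [i fire_i] := Gjump_fires Gk; apply: fires_cube cube_end fire_i.
have cube k t : (k <= J1)%N -> ts k <= t <= ts k.+1 -> in_unit_cube (tau t k).
  move=> kJ1 tk; have [_ cube_k] := start k kJ1.
  have [tsk_lt | tsk_eq] := Rle_lt_or_eq_dec _ _ (mono k kJ1); last first.
    by rewrite (_ : t = ts k); [| lra].
  have [_ cube_end] := segment_cube tsk_lt (fun s sk => ts_dom s k kJ1 sk).
  have [flow_t _] := flow k t kJ1 tk; have [flow_end _] := flow k (ts k.+1) kJ1 ltac:(lra).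
  move=> j; rewrite flow_t; have := cube_end j; have := cube_k j; rewrite flow_end.
  have : (t - ts k) / T <= (ts k.+1 - ts k) / T.
    by apply: Rmult_le_compat_r; [left; apply: Rinv_0_lt_compat | lra].
  have : 0 <= (t - ts k) / T by apply: Rmult_le_pos; [lra | left; apply: Rinv_0_lt_compat].
  lra.
exists ts; split=> // [k t kJ1 tk | k t kJ1 tk | k t kJ1 tk | k kJ1].
- exact: ts_dom.
- by have [_ ->] := flow k t kJ1 tk; have [] := start k kJ1.
- by have [] := flow k t kJ1 tk.
have [_ [Gk _]] := jump k kJ1; rewrite lam_end ?(start k _).1 in Gk; try exact: ltnW.
exact: Gjump_fires Gk.
Qed.

(* Replacing the flow interval of index [K] by the affine flow from [y] on
   [ts K, ts K.+1] and discarding later ones. *)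
Section TailExtension.
Variables (ts : nat -> R) (K : nat) (y : 'I_N -> R).

Definition tail_tau t k : 'I_N -> R := if k == K then fun j => y j + (t - ts K) / T else tau t k.
Definition tail_lam t k : nat := if k == K then K else lam t k.

Hypotheses (ts0 : ts 0%N = 0) (ts_mono : forall k, (k <= K)%N -> ts k <= ts k.+1)
  (dom_sub : forall t k, dom t k -> stepped_domain ts K t k)
  (dom_back : forall t k, k <> K -> stepped_domain ts K t k -> dom t k)
  (tail_agree : forall t, dom t K -> lam t K = K /\ forall j, tau t K j = y j + (t - ts K) / T)
  (tail_cube : forall t, ts K < t < ts K.+1 -> in_unit_cube (fun j => y j + (t - ts K) / T))
  (tail_jump : forall t k, k.+1 = K -> stepped_domain ts K t k -> stepped_domain ts K t K ->
     ~ dom t K -> in_D (tau t k) (lam t k) /\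
     Gjump r (xi (lam t k)) (tau t k) (fun j => y j + (t - ts K) / T) /\ K = (lam t k).+1).

Lemma tail_agrees t k : dom t k -> tail_tau t k = tau t k /\ tail_lam t k = lam t k.
Proof.
rewrite /tail_tau /tail_lam; have [kK dom_tK | //] := eqVneq k K.
rewrite kK in dom_tK *; have [lamK tauK] := tail_agree dom_tK.
by split=> //; apply: functional_extensionality => j; rewrite tauK.
Qed.

Lemma tail_extension_jump t k : stepped_domain ts K t k -> stepped_domain ts K t k.+1 ->
  in_D (tail_tau t k) (tail_lam t k) /\
  Gjump r (xi (tail_lam t k)) (tail_tau t k) (tail_tau t k.+1) /\
  tail_lam t k.+1 = (tail_lam t k).+1.
Proof.
move=> dom_tk dom_tk1; have [_ [_ [_ [_ [_ [_ jumps]]]]]] := sol.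
have kK : k <> K by move: dom_tk1 => [k1K _] kK; rewrite kK in k1K; lia.
have [k1K | k1K] := eqVneq k.+1 K; last first.
  have [-> ->] := tail_agrees (dom_back kK dom_tk).
  have [-> ->] := tail_agrees (dom_back (elimN eqP k1K) dom_tk1).
  by apply: jumps; apply: dom_back => //; exact/eqP.
have [dom_tK | nodom_tK] := classic (dom t K); last first.
  have dom'_tK := dom_tk1; rewrite k1K in dom'_tK.
  rewrite /tail_tau /tail_lam k1K eqxx (introF eqP kK).
  exact: tail_jump k1K dom_tk dom'_tK nodom_tK.
rewrite -k1K in dom_tK; have [-> ->] := tail_agrees (dom_back kK dom_tk).
have [-> ->] := tail_agrees dom_tK.
by apply: jumps => //; apply: dom_back.
Qed.

Lemma tail_extension_solution : is_solution E T r xi (stepped_domain ts K) tail_tau tail_lam.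
Proof.
have [htd [dom00 [init [ac [interior [null _]]]]]] := sol.
have [tau00' lam00'] := tail_agrees dom00.
split; first exact: stepped_domain_htd.
split; first exact: dom_sub.
split; first by rewrite tau00' lam00'.
split.
  move=> k c d cd cd_dom; rewrite /tail_tau /tail_lam.
  have [kK | kK] := eqVneq k K.
    by subst k; split=> [j|]; [apply: abs_cont_on_affine | apply: abs_cont_on_const].
  by apply: ac => // t tcd; apply: dom_back; [exact/eqP | exact: cd_dom].
split.
  move=> t k [e [e0 near_dom]]; rewrite /in_C /tail_tau.
  have [kK | kK] := eqVneq k K.
    subst k.
    have [[_ lo] [_ hi]] := (near_dom (t - e / 2) ltac:(split_Rabs; lra),
                             near_dom (t + e / 2) ltac:(split_Rabs; lra)).
    by apply: tail_cube; lra.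
  apply: interior; exists e; split=> // s ts_near.
  by apply: dom_back; [exact/eqP | exact: near_dom].
split.
  move=> k; rewrite /tail_tau /tail_lam; have [kK | kK] := eqVneq k K.
    subst k; apply: null_set_sub (null K) _ => t [_ []]; split=> [j|]; first exact: affine_deriv.
    exact: derivable_pt_lim_const.
  apply: null_set_sub (null k) _ => t [dom_tk nderiv]; split=> //.
  by apply: dom_back dom_tk; exact/eqP.
exact: tail_extension_jump.
Qed.

Lemma tail_extension_not_maximal : is_maximal_solution E T r xi dom tau lam ->
  (exists t k, stepped_domain ts K t k /\ ~ dom t k) -> False.
Proof.
move=> [_ maximal] [t [k [dom'_tk nodom_tk]]]; apply: maximal.
exists (stepped_domain ts K), tail_tau, tail_lam; split; first exact: tail_extension_solution.
split; first exact: dom_sub.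
split; first by exists t, k.
by move=> t' k' dom_t'k'; have [-> ->] := tail_agrees dom_t'k'.
Qed.

End TailExtension.

Lemma jump_time_unique t t' k : dom t k -> dom t k.+1 -> dom t' k -> dom t' k.+1 -> t = t'.
Proof.
move=> dom_tk dom_tk1 dom_t'k dom_t'k1.
have := solution_time_mono dom_tk dom_t'k1 (ltnSn k).
by have := solution_time_mono dom_t'k dom_tk1 (ltnSn k); lra.
Qed.

Lemma schedule_time_unique ts ts' T1 T2 J1 J2 k :
  jump_schedule ts T1 J1 -> jump_schedule ts' T2 J2 -> (k <= J1)%N -> (k <= J2)%N -> ts k = ts' k.
Proof.
case: k => [|k] sched sched' kJ1 kJ2.
  by rewrite (schedule_start sched) (schedule_start sched').
have end_dom (s : nat -> R) T3 J3 m : jump_schedule s T3 J3 -> (m < J3)%N ->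
    dom (s m.+1) m /\ dom (s m.+1) m.+1.
  move=> sch mJ3; have := schedule_mono sch (ltnW mJ3); have := schedule_mono sch mJ3.
  by split; apply: (schedule_dom sch); lia || lra.
have [dom_k dom_k1] := end_dom _ _ _ k sched kJ1.
have [dom'_k dom'_k1] := end_dom _ _ _ k sched' kJ2.
exact: jump_time_unique dom_k dom_k1 dom'_k dom'_k1.
Qed.

(* With [J] the last jump index, the solution extends: by a jump if it reaches
   the time [b] at which the leading agent [j0] reaches phase 1, by flowing up
   to [b] otherwise. *)
Section MaximalIndex.
Variables (t1 : R) (J : nat) (ts : nat -> R) (j0 : 'I_N).
Hypotheses (maximal_sol : is_maximal_solution E T r xi dom tau lam)
  (J_max : forall t k, dom t k -> (k <= J)%N) (sched : jump_schedule ts t1 J)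
  (j0_max : forall j, tau (ts J) J j <= tau (ts J) J j0).

Lemma earlier_intervals t k : (k < J)%N -> dom t k <-> ts k <= t <= ts k.+1.
Proof.
move=> kJ; split=> [dom_tk | tk]; last by apply: (schedule_dom sched) => //; exact: ltnW.
have dom_t1J : dom t1 J by apply: (schedule_dom sched (leqnn J)); rewrite -(schedule_end sched);
  have := schedule_mono sched (leqnn J); lra.
have tt1 := solution_time_mono dom_tk dom_t1J kJ.
exact: (schedule_covers sched) dom_tk tt1 (ltnW kJ).
Qed.

Lemma last_interval t : dom t J -> ts J <= t /\ forall s, ts J <= s <= t ->
  [/\ dom s J, lam s J = J, in_unit_cube (tau s J) &
      forall j, tau s J j = tau (ts J) J j + (s - ts J) / T].
Proof.
move=> dom_tJ; have [ts2 sched2] := solution_schedule dom_tJ.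
have <- := schedule_time_unique sched2 sched (leqnn J) (leqnn J).
have tsJ := schedule_mono sched2 (leqnn J); rewrite (schedule_end sched2) in tsJ.
split=> // s [Js st]; have sJ : ts2 J <= s <= ts2 J.+1 by rewrite (schedule_end sched2); lra.
split; [exact: (schedule_dom sched2) | exact: (schedule_lam sched2) |
        exact: (schedule_cube sched2) | exact: (schedule_flow sched2)].
Qed.

Let b := ts J + T * (1 - tau (ts J) J j0).
Let ts' k := if (k <= J)%N then ts k else b.

Lemma last_interval_le t : dom t J -> t <= b.
Proof.
move=> dom_tJ; have [Jt shape] := last_interval dom_tJ.
have [_ _ cube_t flow_t] := shape t (conj Jt (Rle_refl t)).
have := cube_t j0; rewrite flow_t => -[_ le1].
have : (t - ts J) / T * T <= (1 - tau (ts J) J j0) * T by apply: Rmult_le_compat_r; lra.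
by rewrite /b (_ : (t - ts J) / T * T = t - ts J); [lra | field; lra].
Qed.

Lemma start_le_b : ts J <= b.
Proof.
have := schedule_mono sched (leqnn J) => tsJ.
have [_ le1] := schedule_cube sched (leqnn J) (conj (Rle_refl _) tsJ) j0.
by have := Rmult_le_pos T (1 - tau (ts J) J j0) ltac:(lra) ltac:(lra); rewrite /b; lra.
Qed.

Lemma extended_mono k : (k <= J.+1)%N -> ts' k <= ts' k.+1.
Proof.
move=> kJ1; rewrite /ts'; have [kJ | Jk] := ltnP k J.
  by rewrite (ltnW kJ); apply: (schedule_mono sched); exact: ltnW.
case: ifP => kJ; last lra.
by rewrite (_ : k = J); [exact: start_le_b | apply/eqP; rewrite eqn_leq kJ Jk].
Qed.

Lemma extended_dom_sub t k : dom t k -> stepped_domain ts' J t k.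
Proof.
move=> dom_tk; have kJ := J_max dom_tk; split=> //; rewrite /ts' kJ.
have [kJ' | Jk] := ltnP k J; first by apply/earlier_intervals.
have {Jk}kJ : k = J by apply/eqP; rewrite eqn_leq kJ Jk.
by subst k; have [Jt _] := last_interval dom_tk; have := last_interval_le dom_tk; lra.
Qed.

Lemma earlier_back K t k : (k < J)%N -> stepped_domain ts' K t k -> dom t k.
Proof. by move=> kJ [_]; rewrite /ts' (ltnW kJ) kJ => tk; apply/earlier_intervals. Qed.

Lemma b_offset : (b - ts J) / T = 1 - tau (ts J) J j0.
Proof. by rewrite /b; field; lra. Qed.

Lemma no_flow_extension : ~ dom b J -> False.
Proof.
move=> nodom_bJ.
have tsJ := schedule_mono sched (leqnn J).
have dom_aJ : dom (ts J) J by apply: (schedule_dom sched (leqnn J)); lra.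
have cube_a : in_unit_cube (tau (ts J) J).
  by apply: (schedule_cube sched (leqnn J)); lra.
have ts'J : ts' J = ts J by rewrite /ts' leqnn.
have ts'J1 : ts' J.+1 = b by rewrite /ts' ltnn.
apply: (tail_extension_not_maximal (ts := ts') (K := J) (y := tau (ts J) J)) maximal_sol _.
- by rewrite /ts' leq0n (schedule_start sched).
- by move=> k kJ; apply: extended_mono; exact: leqW.
- exact: extended_dom_sub.
- move=> t k kJ dom'_tk; apply: (earlier_back _ dom'_tk).
  by case: dom'_tk => kJ' _; rewrite ltn_neqAle kJ' andbT; exact/eqP.
- move=> t dom_tJ; have [Jt shape] := last_interval dom_tJ.
  by have [_ lamJ _ flowJ] := shape t (conj Jt (Rle_refl t)); rewrite ts'J.
- rewrite ts'J ts'J1 => t tb j; have [y0 _] := cube_a j; have := j0_max j.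
  have : (t - ts J) / T < (b - ts J) / T.
    by apply: Rmult_lt_compat_r; [apply: Rinv_0_lt_compat | lra].
  have : 0 < (t - ts J) / T by apply: Rdiv_lt_0_compat; lra.
  by rewrite b_offset; split; lra.
- move=> t k k1J [_ tk] [_ tJ] nodom_tJ; exfalso; apply: nodom_tJ.
  by rewrite k1J ts'J in tk; rewrite ts'J in tJ; rewrite (_ : t = ts J); [| lra].
exists b, J; split=> //; split=> //; rewrite ts'J ts'J1; have := start_le_b; lra.
Qed.

Lemma no_jump_extension : dom b J -> False.
Proof.
move=> dom_bJ; have [Jb shape_b] := last_interval dom_bJ.
have [_ lam_b cube_b flow_b] := shape_b b (conj Jb (Rle_refl b)).
have tau_bj0 : tau b J j0 = 1 by rewrite flow_b b_offset; ring.
have [g Gbg] := Gjump_nonempty r (xi J) cube_b tau_bj0.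
have ts'J1 : ts' J.+1 = b by rewrite /ts' ltnn.
have ts'J2 : ts' J.+2 = b by rewrite /ts' ltnNge leqnSn.
apply: (tail_extension_not_maximal (ts := ts') (K := J.+1) (y := g)) maximal_sol _.
- by rewrite /ts' leq0n (schedule_start sched).
- exact: extended_mono.
- by move=> t k /extended_dom_sub [kJ tk]; split=> //; exact: leqW.
- move=> t k kJ1 [kJ1' tk]; have [kJ | Jk] := ltnP k J; first by apply: (earlier_back (K := J.+1)).
  have {kJ1 kJ1' Jk} kJ : k = J by lia.
  subst k; rewrite ts'J1 /ts' leqnn in tk.
  by have [] := shape_b t tk.
- by move=> t /J_max; rewrite ltnn.
- by rewrite ts'J1 ts'J2 => t; lra.
- move=> t k /eq_add_S -> [_ tJ] [_ tJ1] _.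
  rewrite ts'J1 in tJ; rewrite ts'J1 ts'J2 in tJ1; have -> : t = b by lra.
  rewrite lam_b; split; first by split=> //; exists j0.
  split=> //; rewrite ts'J1 (_ : (fun j => g j + (b - b) / T) = g) //.
  by apply: functional_extensionality => j; rewrite Rminus_diag /Rdiv Rmult_0_l Rplus_0_r.
exists b, J.+1; split; first by split=> //; rewrite ts'J1 ts'J2; lra.
by move/J_max; rewrite ltnn.
Qed.

End MaximalIndex.

Lemma maximal_solution_jumps (i0 : 'I_N) K :
  is_maximal_solution E T r xi dom tau lam -> exists t k, dom t k /\ (K <= k)%N.
Proof.
move=> maximal_sol; apply: NNPP => bounded.
have dom00 : dom 0 0%N by have [_ []] := sol.
have below_K k : (exists t, dom t k) -> (k < K)%N.
  by move=> [t dom_tk]; rewrite ltnNge; apply/negP => Kk; apply: bounded; exists t, k.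
have [J [[t1 dom_t1J] J_max]] :=
  nat_max_of_bounded (ex_intro _ 0%N (ex_intro _ 0 dom00)) below_K.
have {}J_max t k : dom t k -> (k <= J)%N by move=> dom_tk; apply: J_max; exists t.
have [ts sched] := solution_schedule dom_t1J.
have [j0 j0_max] := exists_argmax (tau (ts J) J) i0.
case: (classic (dom (ts J + T * (1 - tau (ts J) J j0)) J)).
  exact: (no_jump_extension (j0 := j0) maximal_sol J_max sched).
exact: (no_flow_extension maximal_sol J_max sched j0_max).
Qed.

Lemma schedule_step_le ts T1 J1 k (i0 : 'I_N) : jump_schedule ts T1 J1 -> (k <= J1)%N ->
  ts k.+1 - ts k <= T.
Proof.
move=> sched kJ1; have tsk := schedule_mono sched kJ1.
have [_ le1] := schedule_cube sched kJ1 (conj tsk (Rle_refl _)) i0.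
have [ge0 _] := schedule_cube sched kJ1 (conj (Rle_refl _) tsk) i0.
rewrite (schedule_flow sched kJ1 (conj tsk (Rle_refl _))) in le1.
have : (ts k.+1 - ts k) / T * T <= 1 * T by apply: Rmult_le_compat_r; lra.
by rewrite (_ : _ / T * T = ts k.+1 - ts k); [lra | field; lra].
Qed.

Lemma schedule_phase_run ts T1 J1 (i0 : 'I_N) : jump_schedule ts T1 J1 ->
  exists fire, phase_run r T xi (fun k => tau (ts k) k) (fun k => tau (ts k.+1) k)
                 (fun k => ts k.+1 - ts k) fire J1.
Proof.
move=> sched.
have fire_k k : exists i, (k < J1)%N -> fires r (xi k) i (tau (ts k.+1) k) (tau (ts k.+1) k.+1).
  by case: (ltnP k J1) => [/(schedule_fires sched) [i ?] | _]; [exists i | exists i0].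
exists (fun k => proj1_sig (constructive_indefinite_description _ (fire_k k))).
have mono := schedule_mono sched.
split=> k kJ1.
- by move=> j; apply: (schedule_flow sched kJ1); have := mono k kJ1; lra.
- by have := mono k kJ1; lra.
- by apply: (schedule_cube sched kJ1); have := mono k kJ1; lra.
- by apply: (schedule_cube sched kJ1); have := mono k kJ1; lra.
exact: (proj2_sig (constructive_indefinite_description _ (fire_k k))).
Qed.

Lemma schedule_time_le ts T1 J1 k (i0 : 'I_N) : jump_schedule ts T1 J1 -> (k <= J1.+1)%N ->
  ts k <= INR k * T.
Proof.
move=> sched; elim: k => [|k IHk] kJ1; first by rewrite (schedule_start sched) /=; lra.
have := schedule_step_le i0 sched kJ1.
by rewrite S_INR; have := IHk (ltnW kJ1); lra.
Qed.

Section SyncString.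
Variables (istar : 'I_N) (s qs : nat).
Hypotheses (r01 : forall i, 0 < r i < 1) (root : is_root E istar) (qs_max : is_qstar E istar qs)
  (string : forall m, (m < ellstar r * qs)%N ->
     forall a b, xi (s + m)%N a b = true <-> Gq E istar (m %/ ellstar r) a b).

Lemma synchronized_after_string t k : dom t k -> (s + ellstar r * qs <= k)%N -> in_As (tau t k).
Proof.
move=> dom_tk Kk; have [ts sched] := solution_schedule dom_tk.
have [fire run] := schedule_phase_run istar sched.
have tk := schedule_mono sched (leqnn k); rewrite (schedule_end sched) in tk.
have tk' : ts k <= t <= ts k.+1 by rewrite (schedule_end sched); lra.
apply: synced_all_As; first exact: (schedule_cube sched (leqnn k)).
apply: (synced_shift (z := tau (ts k) k) (c := (t - ts k) / T)).
- by apply: Rmult_le_pos; [lra | left; apply: Rinv_0_lt_compat].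
- exact: (schedule_cube sched (leqnn k)).
- exact: (schedule_flow sched (leqnn k)).
apply: (synced_after_sync_string (E := E) (V := in_Vq E istar) (s := s) (qs := qs) T0 r01 run);
  rewrite ?Kk ?leqnn //.
- exact: layer_pred.
- exact: layer_unique.
- exact: layer0_root.
- exact: layer0_only.
- by move=> a; have [q Vq] := layer_exists root a; exists q; split=> //; exact: qs_max.2 Vq.
Qed.

End SyncString.

End Solution.

Theorem theorem1 (N : nat) (E : rel 'I_N) (T : R) (r : 'I_N -> R)
    (xi : nat -> rel 'I_N) (istar : 'I_N) :
  simple_digraph E -> rooted E -> 0 < T -> (forall i, 0 < r i < 1) ->
  (forall n, feasible E (xi n)) ->
  is_root E istar -> contains_sync E r istar xi ->
  exists (tbar : R) (kbar : nat), 0 <= tbar /\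
    forall dom tau lam,
      is_maximal_solution E T r xi dom tau lam ->
      lam 0 0%N = 0%N -> in_unit_cube (tau 0 0%N) ->
      exists tst kst, dom tst kst /\ tst <= tbar /\ (kst <= kbar)%N /\
        forall t k, dom t k -> tst <= t -> (kst <= k)%N -> in_As (tau t k).
Proof.
(* Only the block [zeta] of [xi] matters. *)
move=> _ _ T0 r01 _ root [qs [s [qs_max string]]].
pose Kst := (s + ellstar r * qs)%N.
exists (INR Kst * T), Kst; split; first by apply: Rmult_le_pos; [apply: pos_INR | lra].
move=> dom tau lam maximal lam00 tau00; have sol := maximal.1.
have [t1 [k1 [dom1 Kk1]]] := maximal_solution_jumps T0 sol lam00 tau00 istar Kst maximal.
have [ts sched] := solution_schedule T0 sol lam00 tau00 dom1.
exists (ts Kst), Kst; split.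
  by apply: (schedule_dom sched Kk1); have := schedule_mono sched Kk1; lra.
split; first exact: (schedule_time_le T0 istar sched (leqW Kk1)).
split=> // t k dom_tk _ Kk.
exact: (synchronized_after_string T0 sol lam00 tau00 r01 root qs_max string dom_tk Kk).
Qed.
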